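(* Let $\mathcal R_1,\mathcal R_2\subset\mathcal G$ be finite generating sets of $\mathcal G$. Then the seminorms $u\mapsto\|\nabla_{\mathcal R_1}u\|_2$ and $u\mapsto\|\nabla_{\mathcal R_2}u\|_2$ on $U_{\mathrm{per}}$ are equivalent and their kernel is $U_{\mathrm{trans}}\cap U_{\mathrm{per}}$.
   Context: Euclidean group: $\mathrm E(n)$ consists of pairs $(A|b)$, $A\in\mathrm O(n)$, $b\in\mathbb R^n$, acting by $(A|b)\cdot x=Ax+b$, product $(A_1|b_1)(A_2|b_2)=(A_1A_2|b_1+A_1b_2)$; $\mathrm{rot}(A|b)=A$. Standing setting: $d=d_1+d_2$; $\mathcal S<\mathrm E(d_2)$ is a space group with translation subgroup $\mathcal T_{\mathcal S}$; $A\oplus(B|b)=(\mathrm{diag}(A,B)|(0,b))$; $\mathcal G$ is a discrete subgroup of $\mathrm E(d)$ contained in $\{A\oplus s:A\in\mathrm O(d_1),s\in\mathcal S\}$ projecting onto $\mathcal S$; $\mathcal T\subset\mathcal G$ maps bijectively onto $\mathcal T_{\mathcal S}$. There is $m_0\in\mathbb N$ such that $\mathcal T^N=\{t^N:t\in\mathcal T\}$ is a normal subgroup iff $N\in\mathcal M=m_0\mathbb N$, then isomorphic to $\mathbb Z^{d_2}$ of finite index; $\mathcal C_N$ is a fixed set of representatives of $\mathcal G/\mathcal T^N$. $U_{\mathrm{per}}$: maps $u:\mathcal G\to\mathbb R^d$ that are $\mathcal T^N$-periodic ($u(gt)=u(g)$ for $t\in\mathcal T^N$) for some $N\in\mathcal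 M$. For finite $\mathcal R$, $\nabla_{\mathcal R}u(g)\in(\mathbb R^d)^{\mathcal R}$, $\nabla_{\mathcal R}u(g)(h)=u(gh)-\mathrm{rot}(h)^Tu(g)$, and for $\mathcal T^N$-periodic $u$, $\|\nabla_{\mathcal R}u\|_2=\big(\frac1{|\mathcal C_N|}\sum_{g\in\mathcal C_N}\sum_{h\in\mathcal R}|\nabla_{\mathcal R}u(g)(h)|^2\big)^{1/2}$. $U_{\mathrm{trans}}$: maps $u:\mathcal G\to\mathbb R^d$ with some $a\in\mathbb R^d$ such that $\mathrm{rot}(g)u(g)=a$ for all $g\in\mathcal G$. *)

From HB Require Import structures.
From mathcomp Require Import all_boot all_order all_algebra.
From mathcomp Require Import reals.
Set Implicit Arguments. Unset Strict Implicit. Unset Printing Implicit Defensive.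
Import Order.TTheory GRing.Theory Num.Theory.
Local Open Scope ring_scope.

Section Euclid.
Variable R : realType.

(* An element (A|b) of E(n), stored as the pair (A, b). *)
Definition iso (n : nat) := ('M[R]_n * 'cV[R]_n)%type.

Definition is_orth n (A : 'M[R]_n) : Prop := A^T *m A = 1%:M.

Definition imul n (g h : iso n) : iso n := (g.1 *m h.1, g.2 + g.1 *m h.2).
Definition iid n : iso n := (1%:M, 0).
Definition iinv n (g : iso n) : iso n := (g.1^T, - (g.1^T *m g.2)).
Definition act n (g : iso n) (x : 'cV[R]_n) : 'cV[R]_n := g.1 *m x + g.2.
Fixpoint ipow n (g : iso n) (N : nat) : iso n :=
  match N with O => iid n | S k => imul (ipow g k) g end.

Definition is_subgroup n (H : iso n -> Prop) : Prop :=
  [/\ (forall g, H g -> is_orth g.1), H (iid n),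
      (forall g h, H g -> H h -> H (imul g h)) &
      (forall g, H g -> H (iinv g))].

(* every point of H is isolated (topology of E(n) as a subspace of M_n x R^n) *)
Definition is_discrete n (H : iso n -> Prop) : Prop :=
  forall g, H g -> exists2 e : R, 0 < e &
    forall h, H h -> (forall i j, `|h.1 i j - g.1 i j| < e) ->
      (forall i, `|h.2 i 0 - g.2 i 0| < e) -> h = g.

(* space group: discrete cocompact subgroup of E(n)
   (cocompact: R^n is covered by closed balls of a fixed radius around the orbit of 0) *)
Definition is_space_group n (S : iso n -> Prop) : Prop :=
  [/\ is_subgroup S, is_discrete S &
      exists2 r : R, 0 < r & forall x : 'cV[R]_n,
        exists s, S s /\ forall i, `|x i 0 - act s 0 i 0| <= r].

Definition translations n (S : iso n -> Prop) : iso n -> Prop :=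
  fun s => S s /\ s.1 = 1%:M.

Definition dsum d1 d2 (A : 'M[R]_d1) (s : iso d2) : iso (d1 + d2) :=
  (block_mx A 0 0 s.1, col_mx 0 s.2).
Definition proj d1 d2 (g : iso (d1 + d2)) : iso d2 := (drsubmx g.1, dsubmx g.2).

Definition Tpow n (T : iso n -> Prop) (N : nat) : iso n -> Prop :=
  fun x => exists2 t, T t & x = ipow t N.

Definition normal_sub n (H G : iso n -> Prop) : Prop :=
  [/\ is_subgroup H, (forall h, H h -> G h) &
      forall g h, G g -> H h -> H (imul (imul g h) (iinv g))].

Definition inM n (G T : iso n -> Prop) (N : nat) : Prop :=
  (0 < N)%N /\ normal_sub (Tpow T N) G.

Definition periodic n (G T : iso n -> Prop) (N : nat) (u : iso n -> 'cV[R]_n) : Prop :=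
  forall g t, G g -> Tpow T N t -> u (imul g t) = u g.

Definition is_reps n (G H : iso n -> Prop) (c : seq (iso n)) : Prop :=
  [/\ uniq c, (forall x, x \in c -> G x) &
      forall g, G g -> exists! c0, c0 \in c /\ H (imul (iinv c0) g)].

Inductive generated n (Rs : seq (iso n)) : iso n -> Prop :=
  | gen_id : generated Rs (iid n)
  | gen_mul : forall x r, generated Rs x -> r \in Rs -> generated Rs (imul x r)
  | gen_mulinv : forall x r, generated Rs x -> r \in Rs -> generated Rs (imul x (iinv r)).

Definition generates n (G : iso n -> Prop) (Rs : seq (iso n)) : Prop :=
  uniq Rs /\ (forall r, r \in Rs -> G r) /\ (forall g, G g -> generated Rs g).

Definition grad n (u : iso n -> 'cV[R]_n) (g h : iso n) : 'cV[R]_n :=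
  u (imul g h) - (h.1)^T *m u g.

Definition sqnorm n (v : 'cV[R]_n) : R := \sum_i v i 0 ^+ 2.

Definition gradnorm n (Rs : seq (iso n)) (c : seq (iso n)) (u : iso n -> 'cV[R]_n) : R :=
  Num.sqrt ((size c)%:R^-1 *
    \sum_(g <- c) \sum_(h <- Rs) sqnorm (grad u g h)).

Definition U_trans n (G : iso n -> Prop) (u : iso n -> 'cV[R]_n) : Prop :=
  exists a : 'cV[R]_n, forall g, G g -> g.1 *m u g = a.

End Euclid.

(* Put v(g) := rot(g) u(g); orthogonality of rot(h) gives |grad u g h| = |v(gh) - v(g)|.
   For w in G let E_w be the sum over the transversal C_N of |v(cw) - v(c)|^2.  Periodicity
   of u and normality of T^N make each summand T^N-invariant in c, and right multiplication
   by w permutes the cosets of T^N, so E_(xw) <= 2 E_x + 2 E_w and E_(w^-1) = E_w.  Writing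
   the elements of one generating set as words in the other bounds one energy by a constant
   multiple of the other, with a constant independent of N and u.  If the energy vanishes,
   so does every E_w, hence v(c w) = v(c) for all w: v is constant, i.e. u lies in U_trans. *)

From Pilot Require Import Defs.
From HB Require Import structures.
From mathcomp Require Import all_boot all_order all_algebra.
From mathcomp Require Import reals.
From mathcomp Require Import lra.
From Stdlib Require Import ClassicalEpsilon.
Set Implicit Arguments. Unset Strict Implicit. Unset Printing Implicit Defensive.
Import Order.TTheory GRing.Theory Num.Theory.
Local Open Scope ring_scope.

(* [fintype.iinv] shadows the inverse of [Defs]. *)
Local Notation iinv := Defs.iinv.

Section IsoGroup.
Variables (R : realType) (n : nat).
Implicit Types (g h k : iso R n) (A : 'M[R]_n) (v : 'cV[R]_n).

Lemma orth_mulmxT A : is_orth A -> A *m A^T = 1%:M.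
Proof. exact: mulmx1C. Qed.

Lemma imulA g h k : imul (imul g h) k = imul g (imul h k).
Proof. by rewrite /imul /= mulmxA mulmxDr mulmxA addrA. Qed.

Lemma imul1g g : imul (iid R n) g = g.
Proof. by case: g => a b; rewrite /imul /= !mul1mx add0r. Qed.

Lemma imulg1 g : imul g (iid R n) = g.
Proof. by case: g => a b; rewrite /imul /= mulmx1 mulmx0 addr0. Qed.

Lemma imulgV g : is_orth g.1 -> imul g (iinv g) = iid R n.
Proof.
case: g => a b /= oa; rewrite /imul /iid /=.
by rewrite orth_mulmxT // mulmxN mulmxA orth_mulmxT // mul1mx subrr.
Qed.

Lemma imulVg g : is_orth g.1 -> imul (iinv g) g = iid R n.
Proof. by case: g => a b /= oa; rewrite /imul /iid /= oa addNr. Qed.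

Lemma iinvK g : is_orth g.1 -> iinv (iinv g) = g.
Proof.
case: g => a b /= oa; rewrite /Defs.iinv /=.
by rewrite trmxK mulmxN opprK mulmxA orth_mulmxT // mul1mx.
Qed.

Lemma iinvM g h : is_orth g.1 -> iinv (imul g h) = imul (iinv h) (iinv g).
Proof.
case: g h => a b [c e] /= oa; rewrite /imul /Defs.iinv /= trmx_mul.
congr pair; rewrite mulmxDr -(mulmxA c^T a^T (a *m e)) (mulmxA a^T) oa mul1mx.
by rewrite mulmxN opprD addrC mulmxA.
Qed.

Lemma imulKV g h : is_orth g.1 -> imul (iinv g) (imul g h) = h.
Proof. by move=> og; rewrite -imulA imulVg // imul1g. Qed.

Lemma imulVK g h : is_orth g.1 -> imul g (imul (iinv g) h) = h.
Proof. by move=> og; rewrite -imulA imulgV // imul1g. Qed.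

Lemma is_orth_imul g h : is_orth g.1 -> is_orth h.1 -> is_orth (imul g h).1.
Proof.
by rewrite /is_orth /= trmx_mul => og oh; rewrite mulmxA -(mulmxA h.1^T) og mulmx1.
Qed.

Lemma sqnorm_ge0 v : 0 <= sqnorm v.
Proof. by apply: sumr_ge0 => i _; apply: sqr_ge0. Qed.

Lemma sqnorm0 : sqnorm (0 : 'cV[R]_n) = 0.
Proof. by apply: big1 => i _; rewrite mxE expr0n. Qed.

Lemma sqnormN v : sqnorm (- v) = sqnorm v.
Proof. by apply: eq_bigr => i _; rewrite mxE sqrrN. Qed.

Lemma sqnormD_le v w : sqnorm (v + w) <= 2 * sqnorm v + 2 * sqnorm w.
Proof.
rewrite /sqnorm !mulr_sumr -big_split /=; apply: ler_sum => i _; rewrite mxE.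
have := sqr_ge0 (v i 0 - w i 0); nra.
Qed.

Lemma sqnorm_le0 v : sqnorm v <= 0 -> v = 0.
Proof.
move=> v_le0; have /eqP v0 : sqnorm v == 0 by rewrite eq_le v_le0 sqnorm_ge0.
have vi0 := psumr_eq0P (fun i _ => sqr_ge0 (v i 0)) v0.
apply/matrixP => i j; rewrite (ord1 j) mxE.
by apply/eqP; rewrite -sqrf_eq0 vi0.
Qed.

Lemma sqnorm_orth A v : is_orth A -> sqnorm (A *m v) = sqnorm v.
Proof.
have sqnormE w : sqnorm w = (w^T *m w) 0 0.
  by rewrite mxE; apply: eq_bigr => i _; rewrite !mxE expr2.
by move=> oA; rewrite !sqnormE trmx_mul mulmxA -(mulmxA v^T) oA mulmx1.
Qed.

Definition rotated (u : iso R n -> 'cV[R]_n) g := g.1 *m u g.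

Lemma sqnorm_grad u g h : is_orth g.1 -> is_orth h.1 ->
  sqnorm (grad u g h) = sqnorm (rotated u (imul g h) - rotated u g).
Proof.
move=> og oh; rewrite /rotated /grad.
have -> : g.1 *m u g = (imul g h).1 *m (h.1^T *m u g).
  by rewrite /= mulmxA -(mulmxA g.1) orth_mulmxT // mulmx1.
by rewrite -mulmxBr sqnorm_orth //; apply: is_orth_imul.
Qed.

Lemma grad1 u g : grad u g (iid R n) = 0.
Proof. by rewrite /grad imulg1 /= trmx1 mul1mx subrr. Qed.

End IsoGroup.

Section Cosets.
Variables (R : realType) (n : nat) (G H : iso R n -> Prop) (C : seq (iso R n)).
Hypotheses (HG : is_subgroup G) (HH : normal_sub H G) (HC : is_reps G H C).

Lemma G_orth g : G g -> is_orth g.1.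
Proof. by case: HG => orthG _ _ _; apply: orthG. Qed.

Lemma G1 : G (iid R n).
Proof. by case: HG. Qed.

Lemma GM g h : G g -> G h -> G (imul g h).
Proof. by case: HG => _ _ mulG _; apply: mulG. Qed.

Lemma GV g : G g -> G (iinv g).
Proof. by case: HG => _ _ _ invG; apply: invG. Qed.

Lemma H1 : H (iid R n).
Proof. by case: HH => -[]. Qed.

Lemma HM g h : H g -> H h -> H (imul g h).
Proof. by case: HH => -[_ _ mulH _] _ _; apply: mulH. Qed.

Lemma HV g : H g -> H (iinv g).
Proof. by case: HH => -[_ _ _ invH] _ _; apply: invH. Qed.

Lemma HJ g h : G g -> H h -> H (imul (imul g h) (iinv g)).
Proof. by case: HH => _ _; apply. Qed.

Lemma H_G h : H h -> G h.
Proof. by case: HH => _ HG' _; apply: HG'. Qed.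

Lemma C_G c : c \in C -> G c.
Proof. by case: HC => _ CG _; apply: CG. Qed.

Lemma reps_unique g c1 c2 : G g -> c1 \in C -> c2 \in C ->
  H (imul (iinv c1) g) -> H (imul (iinv c2) g) -> c1 = c2.
Proof.
move=> Gg c1C c2C H1g H2g; case: HC => _ _ /(_ g Gg) [c0 [_ c0_uniq]].
by rewrite -(c0_uniq c1) // -(c0_uniq c2).
Qed.

Lemma reps_nonempty : exists c, c \in C.
Proof. by case: HC => _ _ /(_ _ G1) [c [[cC _] _]]; exists c. Qed.

Definition rep g := epsilon (inhabits g) (fun c => c \in C /\ H (imul (iinv c) g)).

Lemma repP g : G g -> rep g \in C /\ H (imul (iinv (rep g)) g).
Proof.
move=> Gg; apply: (epsilon_spec (inhabits g) (fun c => c \in C /\ H (imul (iinv c) g))).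
by case: HC => _ _ /(_ g Gg) [c [cP _]]; exists c.
Qed.

Lemma rep_mulr_inj w : G w -> {in C &, injective (fun c => rep (imul c w))}.
Proof.
move=> Gw c1 c2 c1C c2C eq_rep; have ow := G_orth Gw.
have c1wG : G (imul c1 w) by apply: GM => //; apply: C_G.
have c2wG : G (imul c2 w) by apply: GM => //; apply: C_G.
have [dC H1d] := repP c1wG; have [_ H2d] := repP c2wG.
rewrite eq_rep in dC H1d; move: (rep _) dC H1d H2d => d dC H1d H2d.
have od := G_orth (C_G dC).
have [t1 Ht1 c1E] : exists2 t, H t & c1 = imul (imul d t) (iinv w).
  by exists (imul (iinv d) (imul c1 w)); rewrite // imulVK // imulA imulgV // imulg1.
have [t2 Ht2 c2E] : exists2 t, H t & c2 = imul (imul d t) (iinv w).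
  by exists (imul (iinv d) (imul c2 w)); rewrite // imulVK // imulA imulgV // imulg1.
have ot1 := G_orth (H_G Ht1).
(* c1^-1 c2 = w (t1^-1 t2) w^-1 lies in H by normality *)
have H12 : H (imul (iinv c1) c2).
  have -> : imul (iinv c1) c2 = imul (imul w (imul (iinv t1) t2)) (iinv w).
    rewrite c1E c2E iinvM; last exact: is_orth_imul.
    by rewrite iinvK // iinvM // !imulA imulKV.
  by apply: HJ => //; apply: HM => //; apply: HV.
apply: (reps_unique (C_G c2C) c1C c2C H12).
by rewrite imulVg; [exact: H1 | apply: G_orth; apply: C_G].
Qed.

Lemma perm_rep_mulr w : G w -> perm_eq [seq rep (imul c w) | c <- C] C.
Proof.
move=> Gw; case: HC => uniqC _ _.
have uniq_img : uniq [seq rep (imul c w) | c <- C].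
  by rewrite map_inj_in_uniq //; apply: rep_mulr_inj.
have img_sub : {subset [seq rep (imul c w) | c <- C] <= C}.
  by move=> _ /mapP [c cC ->]; apply: (repP _).1; apply: GM => //; apply: C_G.
have [_ same_mem] := uniq_min_size uniq_img img_sub (eq_leq (esym (size_map _ _))).
exact: uniq_perm.
Qed.

Lemma big_reps_mulr (V : nmodType) (F : iso R n -> V) w : G w ->
  (forall g t, G g -> H t -> F (imul g t) = F g) ->
  \sum_(c <- C) F (imul c w) = \sum_(c <- C) F c.
Proof.
move=> Gw F_periodic; rewrite -[RHS](perm_big _ (perm_rep_mulr Gw)) big_map.
apply: eq_big_seq => c cC; have cwG : G (imul c w) by apply: GM => //; apply: C_G.
have [repC Hrep] := repP cwG.
by rewrite -{1}(imulVK (imul c w) (G_orth (C_G repC))) F_periodic //; exact: C_G.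
Qed.

End Cosets.

Section Energy.
Variables (R : realType) (n : nat).
Implicit Types (G H : iso R n -> Prop) (C Rs : seq (iso R n)) (u : iso R n -> 'cV[R]_n).

Definition right_periodic G H u := forall g t, G g -> H t -> u (imul g t) = u g.

Definition dir_energy C u (w : iso R n) := \sum_(c <- C) sqnorm (grad u c w).

Definition energy C Rs u := \sum_(c <- C) \sum_(r <- Rs) sqnorm (grad u c r).

Lemma energy_dir C Rs u : energy C Rs u = \sum_(r <- Rs) dir_energy C u r.
Proof. exact: exchange_big. Qed.

Lemma dir_energy_ge0 C u w : 0 <= dir_energy C u w.
Proof. by apply: sumr_ge0 => c _; apply: sqnorm_ge0. Qed.

Lemma energy_ge0 C Rs u : 0 <= energy C Rs u.
Proof. by rewrite energy_dir; apply: sumr_ge0 => r _; apply: dir_energy_ge0. Qed.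

Lemma dir_energy_le_energy C Rs u r : r \in Rs -> dir_energy C u r <= energy C Rs u.
Proof.
move=> rRs; rewrite energy_dir (big_rem r) //= lerDl.
by apply: sumr_ge0 => r' _; apply: dir_energy_ge0.
Qed.

Lemma dir_energy1 C u : dir_energy C u (iid R n) = 0.
Proof. by apply: big1_seq => c _; rewrite grad1 sqnorm0. Qed.

Section Periodic.
Variables (G H : iso R n -> Prop) (C : seq (iso R n)).
Hypotheses (HG : is_subgroup G) (HH : normal_sub H G) (HC : is_reps G H C).
Variable u : iso R n -> 'cV[R]_n.
Hypothesis Hu : right_periodic G H u.

Lemma grad_periodic g t h : G g -> H t -> G h -> grad u (imul g t) h = grad u g h.
Proof.
move=> Gg Ht Gh; have oh := G_orth HG Gh.
have Ht' : H (imul (imul (iinv h) t) h).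
  by rewrite -[X in imul _ X](iinvK oh); apply: (HJ HH) => //; apply: (GV HG).
rewrite /grad; have -> : imul (imul g t) h = imul (imul g h) (imul (imul (iinv h) t) h).
  by rewrite !imulA imulVK.
by rewrite (Hu (GM HG Gg Gh) Ht') (Hu Gg Ht).
Qed.

Lemma dir_energy_shift x w : G x -> G w ->
  \sum_(c <- C) sqnorm (grad u (imul c x) w) = dir_energy C u w.
Proof.
move=> Gx Gw; apply: (big_reps_mulr HG HH HC (F := fun g => sqnorm (grad u g w))) => //.
by move=> g t Gg Ht /=; rewrite grad_periodic.
Qed.

Lemma dir_energy_mul x w : G x -> G w ->
  dir_energy C u (imul x w) <= 2 * dir_energy C u x + 2 * dir_energy C u w.
Proof.
move=> Gx Gw; have [ox ow] := (G_orth HG Gx, G_orth HG Gw).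
rewrite -(dir_energy_shift Gx Gw) /dir_energy !mulr_sumr -big_split /=.
rewrite big_seq [leRHS]big_seq; apply: ler_sum => c cC.
have oc := G_orth HG (C_G HC cC).
have [ocx oxw] := (is_orth_imul oc ox, is_orth_imul ox ow).
rewrite !sqnorm_grad // -imulA; set m := rotated u (imul c x).
have -> : rotated u (imul (imul c x) w) - rotated u c =
          (m - rotated u c) + (rotated u (imul (imul c x) w) - m).
  by rewrite [RHS]addrC addrA subrK.
exact: sqnormD_le.
Qed.

Lemma dir_energy_inv w : G w -> dir_energy C u (iinv w) = dir_energy C u w.
Proof.
move=> Gw; have [ow ow'] := (G_orth HG Gw, G_orth HG (GV HG Gw)).
rewrite -(dir_energy_shift Gw (GV HG Gw)); apply: eq_big_seq => c cC.
have oc := G_orth HG (C_G HC cC).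
rewrite !sqnorm_grad //; last exact: is_orth_imul.
by rewrite imulA imulgV // imulg1 -opprB sqnormN.
Qed.

End Periodic.

End Energy.

Section Generators.
Variables (R : realType) (n : nat) (G : iso R n -> Prop).
Hypothesis HG : is_subgroup G.
Implicit Types (Rs : seq (iso R n)) (K : R).

Definition energy_dominated Rs K (E : seq (iso R n) -> (iso R n -> 'cV[R]_n) -> R) :=
  forall H C u, normal_sub H G -> is_reps G H C -> right_periodic G H u ->
    E C u <= K * energy C Rs u.

Lemma generated_G Rs x : (forall r, r \in Rs -> G r) -> generated Rs x -> G x.
Proof.
move=> RsG; elim=> [|y r _ Gy rRs|y r _ Gy rRs]; first exact: G1.
  by apply: GM => //; apply: RsG.
by apply: GM => //; apply: GV => //; apply: RsG.
Qed.

Lemma dir_energy_generated Rs x : (forall r, r \in Rs -> G r) -> generated Rs x ->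
  exists2 K, 0 <= K & energy_dominated Rs K (fun C u => dir_energy C u x).
Proof.
move=> RsG; elim=> [|x' r gx [K K0 bound] rRs|x' r gx [K K0 bound] rRs].
  by exists 0 => // H C u _ _ _; rewrite dir_energy1 mul0r.
all: exists (2 * K + 2) => [|H C u HH HC Hu]; first by rewrite addr_ge0 ?mulr_ge0.
all: have [Gx Gr] := (generated_G RsG gx, RsG r rRs).
  apply: le_trans (dir_energy_mul HG HH HC Hu Gx Gr) _.
2: apply: le_trans (dir_energy_mul HG HH HC Hu Gx (GV HG Gr)) _.
2: rewrite (dir_energy_inv HG HH HC Hu Gr).
all: have := bound H C u HH HC Hu; have := dir_energy_le_energy C u rRs.
all: have := energy_ge0 C Rs u; nra.
Qed.

Lemma energy_dominated_generates Rs1 Rs2 : generates G Rs1 -> (forall r, r \in Rs2 -> G r) ->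
  exists2 K, 0 <= K & energy_dominated Rs1 K (fun C u => energy C Rs2 u).
Proof.
case=> _ [Rs1G genRs1]; elim: Rs2 => [|r Rs2 IH] Rs2G.
  by exists 0 => // H C u _ _ _; rewrite energy_dir big_nil mul0r.
have [K1 K10 bound1] := dir_energy_generated Rs1G (genRs1 r (Rs2G r (mem_head r Rs2))).
have [K2 K20 bound2] : exists2 K, 0 <= K & energy_dominated Rs1 K (fun C u => energy C Rs2 u).
  by apply: IH => r' r'Rs2; apply: Rs2G; rewrite in_cons r'Rs2 orbT.
exists (K1 + K2) => [|H C u HH HC Hu]; first exact: addr_ge0.
rewrite energy_dir big_cons -energy_dir mulrDl.
by apply: lerD; [exact: (bound1 H) | exact: (bound2 H)].
Qed.

Lemma gradnorm_le Rs1 Rs2 : generates G Rs1 -> generates G Rs2 ->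
  exists2 c : R, 0 < c & forall H C u,
    normal_sub H G -> is_reps G H C -> right_periodic G H u ->
    gradnorm Rs2 C u <= c * gradnorm Rs1 C u.
Proof.
move=> genRs1 [_ [Rs2G _]].
have [K K0 bound] := energy_dominated_generates genRs1 Rs2G.
exists (Num.sqrt K + 1) => [|H C u HH HC Hu]; first by rewrite ltr_wpDl ?sqrtr_ge0.
have size_ge0 : 0 <= (size C)%:R^-1 :> R by rewrite invr_ge0 ler0n.
apply: (@le_trans _ _ (Num.sqrt K * gradnorm Rs1 C u)); last first.
  by rewrite mulrDl mul1r lerDl sqrtr_ge0.
rewrite /gradnorm -sqrtrM // ler_sqrt; last by rewrite !mulr_ge0 ?energy_ge0.
by rewrite mulrCA ler_wpM2l //; apply: (bound H).
Qed.

Lemma gradnorm_eq0 Rs H C u : generates G Rs ->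
  normal_sub H G -> is_reps G H C -> right_periodic G H u ->
  gradnorm Rs C u = 0 <-> U_trans G u.
Proof.
move=> [_ [RsG genRs]] HH HC Hu; have [c0 c0C] := reps_nonempty HG HC.
have size_gt0 : 0 < (size C)%:R^-1 :> R by rewrite invr_gt0 ltr0n; case: (C) c0C.
rewrite /gradnorm -/(energy C Rs u); split.
  move/eqP; rewrite sqrtr_eq0 pmulr_rle0 // => E_le0.
  have Gc0 := C_G HC c0C; have oc0 := G_orth HG Gc0.
  exists (rotated u c0) => g Gg.
  have Gx : G (imul (iinv c0) g) by apply: GM => //; apply: GV.
  have ox := G_orth HG Gx.
  have [K K0 bound] := dir_energy_generated RsG (genRs _ Gx).
  have : sqnorm (grad u c0 (imul (iinv c0) g)) <= 0.
    apply: le_trans (le_trans (bound H C u HH HC Hu) (mulr_ge0_le0 K0 E_le0)).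
    by rewrite /dir_energy (big_rem c0) //= lerDl sumr_ge0 // => c _; apply: sqnorm_ge0.
  rewrite sqnorm_grad //.
  by move/sqnorm_le0/eqP; rewrite subr_eq0 imulVK // => /eqP.
case=> a Ha; suff -> : energy C Rs u = 0 by rewrite mulr0 sqrtr0.
apply: big1_seq => c /andP [_ cC]; apply: big1_seq => r /andP [_ rRs].
have [Gc Gr] := (C_G HC cC, RsG r rRs).
have [oc or] := (G_orth HG Gc, G_orth HG Gr).
by rewrite sqnorm_grad // /rotated !Ha ?subrr ?sqnorm0 //; apply: GM.
Qed.

End Generators.

Theorem theorem4p5 (R : realType) (d1 d2 : nat)
  (S : iso R d2 -> Prop) (G T : iso R (d1 + d2) -> Prop)
  (C : nat -> seq (iso R (d1 + d2)))
  (Rs1 Rs2 : seq (iso R (d1 + d2)))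
  (HS : is_space_group S)
  (HGsub : is_subgroup G) (HGdisc : is_discrete G)
  (HGform : forall g, G g -> exists (A : 'M[R]_d1) (s : iso R d2), [/\ is_orth A, S s & g = dsum A s])
  (HGonto : forall s, S s -> exists2 g, G g & proj g = s)
  (HTG : forall t, T t -> G t)
  (HTinj : forall t t', T t -> T t' -> proj t = proj t' -> t = t')
  (HTonto : forall s, translations S s <-> exists2 t, T t & proj t = s)
  (HC : forall N, inM G T N -> is_reps G (Tpow T N) (C N))
  (HR1 : generates G Rs1) (HR2 : generates G Rs2) :
  (exists c1, exists c2, [/\ 0 < c1, 0 < c2 &
     forall N u, inM G T N -> periodic G T N u ->
       c1 * gradnorm Rs1 (C N) u <= gradnorm Rs2 (C N) u /\
       gradnorm Rs2 (C N) u <= c2 * gradnorm Rs1 (C N) u])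
  /\ (forall N u, inM G T N -> periodic G T N u ->
       (gradnorm Rs1 (C N) u = 0 <-> U_trans G u) /\
       (gradnorm Rs2 (C N) u = 0 <-> U_trans G u)).
Proof.
have [a a0 le21] := gradnorm_le HGsub HR2 HR1.
have [b b0 le12] := gradnorm_le HGsub HR1 HR2.
split.
  exists a^-1, b; split; rewrite ?invr_gt0 // => N u hN Hu.
  have [HN HCN] := (hN.2, HC N hN).
  by rewrite ler_pdivrMl // (le21 _ _ _ HN HCN Hu) (le12 _ _ _ HN HCN Hu).
move=> N u hN Hu; have [HN HCN] := (hN.2, HC N hN).
by split; apply: (gradnorm_eq0 HGsub _ HN HCN Hu).
Qed.
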